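(* Let $K_4$ be the complete graph on $4$ vertices. Then $K_4\notin\mathfrak{F}$, but $K_4\in\mathcal{P}$.
   Context: Graphs are finite, simple and undirected. $\mathbb{T}=\{z\in\mathbb{C}:|z|=1\}$, $\mathbb{I}=[0,2\pi)$. A $\mathbb{T}$-gain on $G$ is a map $\varphi$ from oriented edges to $\mathbb{T}$ with $\varphi(\overrightarrow{e_{ts}})=\varphi(\overrightarrow{e_{st}})^{-1}$; $A(\Phi)$ for $\Phi=(G,\varphi)$ is the Hermitian matrix with $(s,t)$ entry $\varphi(\overrightarrow{e_{st}})$ if $v_s\sim v_t$, else $0$; $\mathcal{T}_G$ is the set of all $\mathbb{T}$-gain graphs on $G$. $\Re(A)\ge0$ means the real part of every entry of $A$ is nonnegative. The gain of a directed cycle is the product of gains of its oriented edges. A rooted spanning tree $T$ with root $v_r$ induces the tree order ($v_x\le v_y$ iff $v_x$ is on the $T$-path from $v_r$ to $v_y$); $T$ is normal if adjacent vertices of $G$ are always comparable. The suitably oriented graph $\overrightarrow{G_T}$ orients each edge $e_{st}$ with $v_s\le v_t$ as $\overrightarrow{e_{st}}$ if $e_{st}\in E(T)$ and as $\overrightarrow{e_{ts}}$ otherwise; the $m-n+1$ fundamental cycles $C_j$ of $T$ become directed cycles $\overrightarrow{C_j(T)}$. For $r=(c_1,\dots,c_{m-n+1})\in\mathbb{I}^{m-n+1}$, $\mathcal{A}_T(r)=\{(G,\varphi)\in\mathcal{T}_G:\varphi(\overrightarrow{C_j(T)})=e^{ic_j}\ \forall j\}$. $G$ has property GNRP (w.r.t.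 normal spanning tree $T$) if for each $r$ there is $\Phi\in\mathcal{A}_T(r)$ with $\Re(A(\Phi))\ge0$; $\mathcal{P}$ is the class of connected graphs with GNRP. The sum of subgraphs is the subgraph consisting of all edges in at least one of them. A fundamental subgraph of $G$ w.r.t. $T$ is the sum of a maximal collection of fundamental cycles whose sum intersects $T$ in a subtree. A fundamental subgraph built from fundamental cycles $C_1,\dots,C_s$ has DEP if they can be ordered $C_{k_1},\dots,C_{k_s}$ with $|E(C_{k_i})\setminus E(C_{k_1}+\cdots+C_{k_{i-1}})|>1$ for $i=2,\dots,s$. A connected graph has DEP if every fundamental subgraph with respect to a normal spanning tree $T$ has DEP; $\mathfrak{F}$ is the collection of connected graphs with DEP. *)

From HB Require Import structures.
From mathcomp Require Import all_boot all_order all_algebra.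
From mathcomp Require Import boolp reals trigo.
From mathcomp Require complex.
Import complex.

Set Implicit Arguments.
Unset Strict Implicit.
Unset Printing Implicit Defensive.

Import Order.TTheory GRing.Theory Num.Theory.
Local Open Scope ring_scope.

(* Edges are the 2-element
   sets [set x; y]; subgraphs are given by their edge sets. *)
Definition simple_graph (V : finType) (e : rel V) : Prop :=
  (forall x, ~~ e x x) /\ (forall x y, e x y = e y x).

Section Graphs.
Variables (V : finType) (e : rel V).

Definition edges : {set {set V}} :=
  [set [set x; y] | x in V, y in V & e x y].

Definition frel (F : {set {set V}}) : rel V :=
  [rel x y | (x != y) && ([set x; y] \in F)].

Definition fverts (F : {set {set V}}) : {set V} :=
  [set x | [exists y, frel F x y]].

(* p is a (simple) path from x to y in the subgraph with edge set F,
   given as the sequence of vertices after x *)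
Definition fpath (F : {set {set V}}) (x y : V) (p : seq V) : bool :=
  [&& path (frel F) x p, last x p == y & uniq (x :: p)].

Definition walk_edges (x : V) (p : seq V) : {set {set V}} :=
  [set [set nth x (x :: p) (val i); nth x p (val i)] | i : 'I_(size p)].

Definition spanning_tree (Tr : {set {set V}}) : Prop :=
  [/\ Tr \subset edges,
      (forall x y, exists p, fpath Tr x y p) &
      (forall x y p q, fpath Tr x y p -> fpath Tr x y q -> p = q)].

(* tree order of the rooted spanning tree (Tr, r):
   x <= y iff x lies on the Tr-path from r to y *)
Definition tle (Tr : {set {set V}}) (r x y : V) : Prop :=
  forall p, fpath Tr r y p -> x \in r :: p.

Definition normal_tree (Tr : {set {set V}}) (r : V) : Prop :=
  spanning_tree Tr /\ (forall x y, e x y -> tle Tr r x y \/ tle Tr r y x).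

(* orientation of the suitably oriented graph G_T: the edge {x,y} with
   x <= y is oriented x -> y if it is a tree edge and y -> x otherwise.
   ori x y holds iff the edge {x,y} is oriented from x to y. *)
Definition ori (Tr : {set {set V}}) (r x y : V) : Prop :=
  if [set x; y] \in Tr then tle Tr r x y else tle Tr r y x.

(* non-tree edges of G (they index the m - n + 1 fundamental cycles) *)
Definition nontree (Tr : {set {set V}}) : {set {set V}} := edges :\: Tr.

Definition fcycle (Tr : {set {set V}}) (E : {set V}) : {set {set V}} :=
  [set F | `[< exists x y, [/\ E = [set x; y], x != y &
               (F = E \/ exists p, fpath Tr x y p /\ F \in walk_edges x p)] >]].

Definition fsum (Tr : {set {set V}}) (S : {set {set V}}) : {set {set V}} :=
  \bigcup_(E in S) fcycle Tr E.

Definition subtree (Tr F : {set {set V}}) : Prop :=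
  [/\ F != set0, F \subset Tr &
      forall x y, x \in fverts F -> y \in fverts F -> connect (frel F) x y].

Definition admissible (Tr S : {set {set V}}) : Prop :=
  [/\ S != set0, S \subset nontree Tr & subtree Tr (fsum Tr S :&: Tr)].

(* S is a maximal collection of fundamental cycles whose sum meets Tr in a
   subtree; fsum Tr S is then a fundamental subgraph w.r.t. Tr *)
Definition fundamental_collection (Tr S : {set {set V}}) : Prop :=
  admissible Tr S /\
  (forall S' : {set {set V}}, S \subset S' -> admissible Tr S' -> S' = S).

Definition DEP_collection (Tr S : {set {set V}}) : Prop :=
  exists s : seq {set V},
    [/\ uniq s, (forall E, E \in s <-> E \in S) &
        forall i, (0 < i < size s)%N ->
          (1 < #|fcycle Tr (nth set0 s i) :\:
                 \bigcup_(j < i) fcycle Tr (nth set0 s j)|)%N].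

Definition DEP_wrt (Tr : {set {set V}}) : Prop :=
  forall S, fundamental_collection Tr S -> DEP_collection Tr S.

Variable R : realType.

Definition expi (c : R) : R[i] := Complex (cos c) (sin c).

Definition is_Tgain (phi : V -> V -> R[i]) : Prop :=
  forall x y, e x y -> `|phi x y| = 1 /\ phi y x = (phi x y)^-1.

Definition gain_adj (phi : V -> V -> R[i]) (s t : V) : R[i] :=
  if e s t then phi s t else 0.

Definition cycle_gain (Tr : {set {set V}}) (r : V) (phi : V -> V -> R[i])
    (E : {set V}) : R[i] :=
  \prod_(xy : V * V | (xy.1 != xy.2) && ([set xy.1; xy.2] \in fcycle Tr E)
                      && `[< ori Tr r xy.1 xy.2 >]) phi xy.1 xy.2.

Definition GNRP_wrt (Tr : {set {set V}}) (r : V) : Prop :=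
  forall c : {set V} -> R,
    (forall E, E \in nontree Tr -> 0 <= c E < 2 * pi) ->
    exists phi : V -> V -> R[i],
      [/\ is_Tgain phi,
          (forall E, E \in nontree Tr -> cycle_gain Tr r phi E = expi (c E)) &
          (forall s t, 0 <= Re (gain_adj phi s t))].

End Graphs.

Definition K4 : rel 'I_4 := fun x y => x != y.

(* A normal spanning tree of K4 is a Hamiltonian path v0 v1 v2 v3 rooted at
   v0; this is checked by evaluation over all 64 edge sets.  Its chords v0v2,
   v1v3 and v0v3 close the triangles v0v1v2, v1v2v3 and the square v0v1v2v3,
   and every tree edge lies on two of these cycles, so whichever cycle comes
   last in an ordering contributes only its chord: K4 is not DEP.
   For GNRP, give every oriented edge an angle in [-pi/2, pi/2], so that its
   gain has nonnegative real part.  Take the angle of v1v2 to be pi/2 or -pi/2,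
   whichever leaves the two triangle targets at total distance at most pi from
   0.  The angles of v0v1 and v2v3 that still solve both triangles then range
   over intervals of total length at least pi; together with the free chord
   v3v0 they sweep a whole period, so the square can be solved as well. *)

From Pilot Require Import Defs.
From mathcomp Require Import all_boot all_order all_algebra.
From mathcomp Require Import boolp reals trigo.
From mathcomp Require complex.
Import complex.
From mathcomp.algebra_tactics Require Import ring lra.

Set Implicit Arguments.
Unset Strict Implicit.
Unset Printing Implicit Defensive.

Import Order.TTheory GRing.Theory Num.Theory.
Local Open Scope ring_scope.

(** * Fundamental cycles *)

Definition pair_eq (T : eqType) (x y a b : T) :=
  ((x == a) && (y == b)) || ((x == b) && (y == a)).

Definition in_walk (T : eqType) (x : T) (p : seq T) (a b : T) :=
  has (fun i => pair_eq a b (nth x (x :: p) i) (nth x p i)) (iota 0 (size p)).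

Definition path4 (T : eqType) (v0 v1 v2 v3 : T) : rel T :=
  fun x y => [|| pair_eq x y v0 v1, pair_eq x y v1 v2 | pair_eq x y v2 v3].

Section FundamentalCycles.
Variables (V : finType) (e : rel V).
Implicit Types (Tr S : {set {set V}}) (E F : {set V}) (a b c d x y : V) (p : seq V).

Lemma eq_set2 a b c d : ([set a; b] == [set c; d]) = pair_eq a b c d.
Proof.
apply/eqP/idP => [ab_cd|/orP[]/andP[/eqP-> /eqP->] //]; last exact: setUC.
have /set2P[ac|ad] : a \in [set c; d] by rewrite -ab_cd set21.
- have /set2P[bc|bd] : b \in [set c; d] by rewrite -ab_cd set22.
    have : d \in [set a; b] by rewrite ab_cd set22.
    by rewrite ac bc setUid => /set1P->; rewrite /pair_eq !eqxx.
  by rewrite /pair_eq ac bd !eqxx.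
have /set2P[bc|bd] : b \in [set c; d] by rewrite -ab_cd set22.
  by rewrite /pair_eq ad bc !eqxx orbT.
have : c \in [set a; b] by rewrite ab_cd set21.
by rewrite ad bd setUid => /set1P->; rewrite /pair_eq !eqxx.
Qed.

Lemma edgesP E : reflect (exists x y, e x y /\ E = [set x; y]) (E \in edges e).
Proof.
apply: (iffP imset2P) => [[x y _]|[x [y [xy ->]]]]; first by rewrite inE; exists x, y.
by exists x y; rewrite ?inE.
Qed.

Lemma frelE Tr x y : x != y -> Defs.frel Tr x y = ([set x; y] \in Tr).
Proof. by rewrite /Defs.frel /= => ->. Qed.

Lemma frel_irreflexive Tr : irreflexive (Defs.frel Tr).
Proof. by move=> x; rewrite /Defs.frel /= eqxx. Qed.

Lemma frel_symmetric Tr : symmetric (Defs.frel Tr).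
Proof. by move=> x y; rewrite /Defs.frel /= eq_sym setUC. Qed.

Lemma frel_path4 (v0 v1 v2 v3 : V) : v0 != v1 -> v1 != v2 -> v2 != v3 ->
  Defs.frel [set [set v0; v1]; [set v1; v2]; [set v2; v3]] = path4 v0 v1 v2 v3.
Proof.
move=> n01 n12 n23; apply/funext=> x; apply/funext=> y.
rewrite /Defs.frel /path4 /= !inE !eq_set2 -orbA; apply: andb_idl.
by case/or3P=> /orP[]/andP[/eqP-> /eqP->] //; rewrite eq_sym.
Qed.

Lemma mem_walk_edges x p a b : ([set a; b] \in walk_edges x p) = in_walk x p a b.
Proof.
apply/imsetP/hasP => [[j _ /eqP]|[j]].
  by rewrite eq_set2 => ab_j; exists (val j); rewrite // mem_iota ltn_ord.
rewrite mem_iota => /andP[_ lt_j] ab_j.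
by exists (Ordinal lt_j) => //; apply/eqP; rewrite eq_set2.
Qed.

Lemma fcycle_edge Tr E F : F \in Defs.fcycle Tr E -> F = E \/ F \in Tr.
Proof.
rewrite inE => /asboolP[x [y [_ _ [->|[p [/and3P[xp _ _] /imsetP[j _ ->]]]]]]].
  by left.
by right; move/pathP: xp => /(_ x j (ltn_ord j)) /andP[].
Qed.

Lemma spanning_tree_subtree Tr : spanning_tree e Tr -> Tr != set0 -> subtree Tr Tr.
Proof.
case=> _ paths _ Tr_n0; split=> // x y _ _.
by have [p /and3P[xp /eqP <- _]] := paths x y; apply/connectP; exists p.
Qed.

Lemma nontree_fundamental_collection Tr :
  spanning_tree e Tr -> Tr != set0 -> nontree e Tr != set0 ->
  Tr \subset fsum Tr (nontree e Tr) -> fundamental_collection e Tr (nontree e Tr).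
Proof.
move=> st Tr_n0 nt_n0 /setIidPr fsumI.
split; first by split=> //; rewrite fsumI; exact: spanning_tree_subtree.
by move=> S' le_S' [_ ge_S' _]; apply/eqP; rewrite eqEsubset ge_S' le_S'.
Qed.

Lemma not_DEP_collection Tr S : (1 < #|S|)%N ->
  (forall E F, E \in S -> F \in Defs.fcycle Tr E -> F != E ->
     exists2 E', E' \in S /\ E' != E & F \in Defs.fcycle Tr E') ->
  ~ DEP_collection Tr S.
Proof.
move=> S_gt1 shared [s [s_uniq sS grows]].
have s_gt1 : (1 < size s)%N.
  have s_S : s =i S by move=> E; apply/idP/idP => /sS.
  by rewrite -(card_uniqP s_uniq) (eq_card s_S).
set i := (size s).-1; set E := nth set0 s i.
have size_sK : i.+1 = size s by rewrite prednK // ltnW.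
have lt_i : (i < size s)%N by rewrite -size_sK.
have gt0_i : (0 < i)%N by rewrite -ltnS size_sK.
have := grows i; rewrite gt0_i lt_i => /(_ isT); apply/negP.
rewrite -leqNgt -(cards1 E) subset_leq_card //; apply/subsetP => F.
rewrite inE in_set1 => /andP[F_new FE]; apply: contraT => FnE.
have [E' [/sS E's E'nE] FE'] := shared E F ((sS _).1 (mem_nth _ lt_i)) FE FnE.
have lt_j : (index E' s < i)%N.
  rewrite ltn_neqAle -ltnS size_sK index_mem E's andbT.
  by apply: contraNneq E'nE => j_i; rewrite -(nth_index set0 E's) j_i.
by case/negP: F_new; apply/bigcupP; exists (Ordinal lt_j); rewrite //= nth_index.
Qed.

Lemma not_DEP_wrt Tr : spanning_tree e Tr -> Tr != set0 ->
  (forall F, F \in Tr -> exists E1 E2, [/\ E1 \in nontree e Tr, E2 \in nontree e Tr,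
     E1 != E2, F \in Defs.fcycle Tr E1 & F \in Defs.fcycle Tr E2]) ->
  ~ DEP_wrt e Tr.
Proof.
move=> st Tr_n0 two_cycles DEP.
have [F0 F0T] := set0Pn _ Tr_n0.
have [E1 [E2 [E1n E2n E12 _ _]]] := two_cycles F0 F0T.
have covered : Tr \subset fsum Tr (nontree e Tr).
  apply/subsetP => F FT; have [E [_ [En _ _ FE _]]] := two_cycles F FT.
  by apply/bigcupP; exists E.
have nt_n0 : nontree e Tr != set0 by apply/set0Pn; exists E1.
have fundamental := nontree_fundamental_collection st Tr_n0 nt_n0 covered.
apply: not_DEP_collection (DEP _ fundamental).
  by apply/card_gt1P; exists E1, E2.
move=> E F En FE FnE.
have FT : F \in Tr by case: (fcycle_edge FE) => // /eqP; rewrite (negbTE FnE).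
have [E3 [E4 [E3n E4n E34 FE3 FE4]]] := two_cycles F FT.
case: (eqVneq E3 E) => [E3E|E3nE]; last by exists E3.
by exists E4 => //; split; rewrite // -E3E eq_sym.
Qed.

Lemma cycle_gainE (R : realType) Tr r (phi : V -> V -> R[i]) E (l : seq (V * V)) :
  uniq l ->
  (forall x y, (x != y) && ([set x; y] \in Defs.fcycle Tr E) && `[< ori Tr r x y >] =
               ((x, y) \in l)) ->
  cycle_gain Tr r phi E = \prod_(xy <- l) phi xy.1 xy.2.
Proof.
move=> l_uniq l_cycle; rewrite /cycle_gain big_uniq //.
by apply: eq_bigl => -[x y]; rewrite l_cycle.
Qed.

End FundamentalCycles.

(** * Angles modulo a period *)

Definition eqmod (R : numDomainType) (m x y : R) := exists k : int, x = y + k%:~R * m.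

Section Angles.
Variable R : realType.
Implicit Types m p c d x y : R.

Lemma eqmodDr m x y z : eqmod m x (y - z) -> eqmod m (x + z) y.
Proof. by case=> k ->; exists k; ring. Qed.

Lemma eqmod_window m c L : 0 < m -> exists2 x, eqmod m x c & L <= x <= L + m.
Proof.
move=> m_gt0; set k := Num.ceil ((L - c) / m).
exists (c + k%:~R * m); first by exists k.
have /andP[lt_k ge_k] := ceil_itv ((L - c) / m).
have kmE : (L - c) / m * m = L - c by rewrite divfK ?gt_eqF.
have := ler_wpM2r (ltW m_gt0) ge_k; rewrite -(ltr_pM2r m_gt0) in lt_k.
by move: lt_k; rewrite intrB mulrBl mul1r kmE => ? ?; apply/andP; split; lra.
Qed.

Lemma split_interval lo1 hi1 lo2 hi2 x : lo1 <= hi1 -> lo2 <= hi2 ->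
  lo1 + lo2 <= x <= hi1 + hi2 ->
  exists x1 x2, [/\ lo1 <= x1 <= hi1, lo2 <= x2 <= hi2 & x = x1 + x2].
Proof.
move=> le1 le2 /andP[lo_x x_hi]; case: (lerP lo1 (x - hi2)) => hx.
  by exists (x - hi2), hi2; split; rewrite ?subrK //; apply/andP; split; lra.
by exists lo1, (x - lo1); split; rewrite ?(addrC lo1) ?subrK //; apply/andP; split; lra.
Qed.

Variable p : R.
Hypothesis p_gt0 : 0 < p.
Let period_gt0 : 0 < 4 * p := mulr_gt0 (ltr0n _ 4) p_gt0.

Lemma antipodal_reps c : exists d d',
  [/\ eqmod (4 * p) d (c - p), eqmod (4 * p) d' (c + p) & `|d| + `|d'| = 2 * p].
Proof.
have [c' [k ->] /andP[lo_c' c'_hi]] := eqmod_window c (- p) period_gt0.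
case: (lerP (c + k%:~R * (4 * p)) p) => c'_p.
  exists (c + k%:~R * (4 * p) - p), (c + k%:~R * (4 * p) + p).
  split; [by exists k; ring | by exists k; ring |].
  by rewrite ler0_norm ?ger0_norm; lra.
exists (c + k%:~R * (4 * p) - p), (c + k%:~R * (4 * p) - 3 * p).
split; [by exists k; ring | by exists (k - 1); rewrite intrB; ring |].
by rewrite ger0_norm ?ler0_norm; lra.
Qed.

(* [c - p] and [c + p] are antipodal modulo [4 p], so their distances to [0]
   add up to [2 p]; summing over [c1] and [c2], one of the shifts [y = p] and
   [y = - p] leaves a total distance of at most [2 p]. *)
Lemma common_shift c1 c2 : exists y d1 d2,
  [/\ `|y| <= p, eqmod (4 * p) d1 (c1 - y), eqmod (4 * p) d2 (c2 - y) &
      `|d1| + `|d2| <= 2 * p].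
Proof.
have [d1 [d1' [e1 e1' s1]]] := antipodal_reps c1.
have [d2 [d2' [e2 e2' s2]]] := antipodal_reps c2.
case: (lerP (`|d1| + `|d2|) (2 * p)) => small.
  by exists p, d1, d2; rewrite (ger0_norm (ltW p_gt0)).
exists (- p), d1', d2'; rewrite normrN (ger0_norm (ltW p_gt0)) opprK.
by split=> //; lra.
Qed.

Lemma half_window d : `|d| <= 2 * p -> exists lo hi,
  hi - lo = 2 * p - `|d| /\ forall x, lo <= x <= hi -> `|x| <= p /\ `|d - x| <= p.
Proof.
rewrite ler_norml => /andP[d_lo d_hi].
have bounds lo hi : lo <= hi -> -p <= lo -> hi <= p -> d - p <= lo -> hi <= d + p ->
    forall x, lo <= x <= hi -> `|x| <= p /\ `|d - x| <= p.
  by move=> *; rewrite !ler_norml; split; apply/andP; split; lra.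
case: (lerP 0 d) => d_sgn.
  by exists (d - p), p; rewrite ger0_norm //; split; [lra | apply: bounds; lra].
by exists (- p), (d + p); rewrite ltr0_norm //; split; [lra | apply: bounds; lra].
Qed.

Lemma K4_cycle_angles c1 c2 c3 : exists a1 a2 a3 b1 b2 b3,
  [/\ all (fun a => `|a| <= p) [:: a1; a2; a3; b1; b2; b3],
      eqmod (4 * p) (a1 + a2 + b1) c1, eqmod (4 * p) (a2 + a3 + b2) c2 &
      eqmod (4 * p) (a1 + a2 + a3 + b3) c3].
Proof.
have [y [d1 [d2 [y_p e1 e2 d12]]]] := common_shift c1 c2.
have d1_le : `|d1| <= 2 * p by have := normr_ge0 d2; lra.
have d2_le : `|d2| <= 2 * p by have := normr_ge0 d1; lra.
have [lo1 [hi1 [w1 win1]]] := half_window d1_le.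
have [lo2 [hi2 [w2 win2]]] := half_window d2_le.
have [s e3 /andP[s_lo s_hi]] :=
  eqmod_window (c3 - y) (lo1 + lo2 - p) period_gt0.
have [u [b [u_range b_range s_ub]]] : exists u b,
    [/\ lo1 + lo2 <= u <= hi1 + hi2, - p <= b <= p & s = u + b].
  by apply: split_interval; [lra | lra | apply/andP; split; lra].
have [x [z [x_range z_range u_xz]]] : exists x z,
    [/\ lo1 <= x <= hi1, lo2 <= z <= hi2 & u = x + z].
  by apply: split_interval; [lra | lra | exact: u_range].
exists x, y, z, (d1 - x), (d2 - z), b.
have [x_p dx_p] := win1 x x_range; have [z_p dz_p] := win2 z z_range.
split.
- by rewrite /= x_p y_p z_p dx_p dz_p ler_norml b_range.
- by rewrite (_ : x + y + (d1 - x) = d1 + y); [exact: eqmodDr | ring].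
- by rewrite (_ : y + z + (d2 - z) = d2 + y); [exact: eqmodDr | ring].
- by rewrite (_ : x + y + z + b = s + y); [exact: eqmodDr | rewrite s_ub u_xz; ring].
Qed.

End Angles.

Section Gains.
Variable R : realType.
Implicit Types a b : R.

Lemma expiD a b : expi (a + b) = expi a * expi b.
Proof. by rewrite /expi cosD sinD; apply/eqP; rewrite eq_complex /= !eqxx /= addrC. Qed.

Lemma expiN a : expi (- a) = (expi a)^-1.
Proof.
apply/esym/mulr1_eq; rewrite -expiD subrr.
by rewrite /expi cos0 sin0.
Qed.

Lemma norm_expi a : `|expi a| = 1.
Proof. by rewrite normc_def /= cos2Dsin2 sqrtr1. Qed.

Lemma expi_periodic a n : expi (a + (pi *+ 2) *+ n) = expi a.
Proof. by rewrite /expi (periodicn (@cosD2pi R)) (periodicn (@sinD2pi R)). Qed.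

Lemma expi_eqmod a b : eqmod (pi *+ 2) a b -> expi a = expi b.
Proof.
case=> -[n|n] ->; first by rewrite pmulrn mulr_natl expi_periodic.
by rewrite NegzE mulrNz pmulrn mulNr mulr_natl -(expi_periodic _ n.+1) subrK.
Qed.

Lemma Re_expi_ge0 a : `|a| <= pi / 2 -> 0 <= Re (expi a).
Proof. by rewrite -complexRe ler0c /= ler_norml; exact: cos_ge0_pihalf. Qed.

End Gains.

(** * Computations on K4 *)

Definition K4_vertices : seq 'I_4 :=
  [:: Ordinal (isT : 0 < 4); Ordinal (isT : 1 < 4); Ordinal (isT : 2 < 4);
      Ordinal (isT : 3 < 4)]%N.

Lemma nth_K4_vertices (x : 'I_4) : nth ord0 K4_vertices x = x.
Proof. by case: x => [[|[|[|[|m]]]] lt_m4] //; apply: val_inj. Qed.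

Lemma mem_K4_vertices (x : 'I_4) : x \in K4_vertices.
Proof. by rewrite -(nth_K4_vertices x) mem_nth. Qed.

(* [[forall x, _]] and [[exists x, _]] do not reduce under [vm_compute]: the
   enumeration of ['I_4] goes through the opaque proof [idP]. *)
Definition every (P : pred 'I_4) := all P K4_vertices.
Definition some (P : pred 'I_4) := has P K4_vertices.
Notation "[ 'every' i .. j , P ]" := (every (fun i => .. (every (fun j => P)) ..))
  (at level 0, i binder, j binder).
Notation "[ 'some' i .. j , P ]" := (some (fun i => .. (some (fun j => P)) ..))
  (at level 0, i binder, j binder).

Lemma everyP (P : pred 'I_4) : reflect (forall x, P x) (every P).
Proof.
apply: (iffP allP) => [P_all x | P_all x _]; last exact: P_all.
exact: P_all (mem_K4_vertices x).
Qed.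

Lemma someP (P : pred 'I_4) : reflect (exists x, P x) (some P).
Proof.
apply: (iffP hasP) => [[x _ Px] | [x Px]]; exists x => //.
exact: mem_K4_vertices.
Qed.

Section K4Reflection.
Implicit Types (t : rel 'I_4) (pt : 'I_4 -> 'I_4 -> seq 'I_4).
Implicit Types (r u w x y : 'I_4) (p : seq 'I_4).

Fixpoint words n : seq (seq 'I_4) :=
  if n is n'.+1 then [::] :: [seq x :: q | x <- K4_vertices, q <- words n']
  else [:: [::]].

Lemma mem_words n p : (size p <= n)%N -> p \in words n.
Proof.
elim: n p => [|n IHn] [|x p] // size_p.
have -> : words n.+1 = [::] :: [seq x :: q | x <- K4_vertices, q <- words n] by [].
rewrite in_cons; apply/orP; right.
by apply/allpairsP; exists (x, p); rewrite mem_K4_vertices IHn.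
Qed.

Definition is_path t x y p := [&& path t x p, last x p == y & uniq (x :: p)].

Lemma is_path_words t x y p : is_path t x y p -> p \in words 3.
Proof.
case/and3P=> _ _ /card_uniqP size_p; apply: mem_words.
by have := max_card (mem (x :: p)); rewrite size_p card_ord.
Qed.

Definition tree_path t x y := head [::] [seq p <- words 3 | is_path t x y p].

(* [tree_path] tabulated, so that the searches through [words 3] are
   evaluated once per relation by [vm_compute] *)
Definition path_table t :=
  let tab := [seq [seq tree_path t x y | y <- K4_vertices] | x <- K4_vertices] in
  fun x y => nth [::] (nth [::] tab x) y.

Lemma path_tableE t : path_table t = tree_path t.
Proof.
apply/funext=> x; apply/funext=> y.
by rewrite /path_table !(nth_map ord0) ?nth_K4_vertices ?size_map.
Qed.

Definition unique_paths t pt := [every x y,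
  is_path t x y (pt x y) && all (fun p => is_path t x y p ==> (p == pt x y)) (words 3)].
Definition tree_le pt r x y := x \in r :: pt r y.
Definition normal_order pt r :=
  [every x y, (x != y) ==> tree_le pt r x y || tree_le pt r y x].
Definition on_fcycle pt u w a b :=
  [|| pair_eq a b u w, in_walk u (pt u w) a b | in_walk w (pt w u) a b].
Definition on_oriented_fcycle t pt r u w x y :=
  [&& x != y, on_fcycle pt u w x y &
      if t x y then tree_le pt r x y else tree_le pt r y x].

Section SpanningTree.
Variable Tr : {set {set 'I_4}}.
Hypothesis Tr_spanning : spanning_tree K4 Tr.
Local Notation t := (Defs.frel Tr).
Local Notation pt := (tree_path (Defs.frel Tr)).

Lemma tree_pathP x y p : Defs.fpath Tr x y p <-> p = pt x y.
Proof.
have [_ paths unique] := Tr_spanning; have [q q_path] := paths x y.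
have : q \in [seq p <- words 3 | is_path t x y p].
  by rewrite mem_filter (is_path_words q_path) andbT.
have := filter_all (is_path t x y) (words 3); rewrite /tree_path.
case: [seq p <- _ | _] => // q' l /andP[q'_path _] _.
by split=> [p_path | ->]; [exact: unique p_path q'_path | exact: q'_path].
Qed.

Lemma tleP r x y : tle Tr r x y <-> tree_le pt r x y.
Proof.
split=> [le_xy | le_xy p /tree_pathP -> //].
by apply: le_xy; apply/tree_pathP.
Qed.

Lemma fcycleE u w a b : u != w ->
  ([set a; b] \in Defs.fcycle Tr [set u; w]) = on_fcycle pt u w a b.
Proof.
move=> uw; rewrite inE /on_fcycle; apply/asboolP/idP.
  case=> x [y [/eqP + _ [ab_uw | [p [/tree_pathP -> ab_walk]]]]].
    by rewrite -eq_set2 ab_uw eqxx.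
  rewrite eq_set2 mem_walk_edges in ab_walk *.
  by case/orP=> /andP[/eqP-> /eqP->]; rewrite ab_walk ?orbT.
case/or3P=> [ab_uw | walk | walk].
- by exists u, w; split=> //; left; apply/eqP; rewrite eq_set2.
- exists u, w; split=> //; right; exists (pt u w).
  by rewrite mem_walk_edges; split=> //; apply/tree_pathP.
- exists w, u; split; [exact: setUC | by rewrite eq_sym | right].
  by exists (pt w u); rewrite mem_walk_edges; split=> //; apply/tree_pathP.
Qed.

Lemma oriented_fcycleE r u w x y : u != w ->
  (x != y) && ([set x; y] \in Defs.fcycle Tr [set u; w]) && `[< ori Tr r x y >] =
  on_oriented_fcycle t pt r u w x y.
Proof.
move=> uw; rewrite /on_oriented_fcycle fcycleE //; case: (eqVneq x y) => //= xy.
congr (_ && _); rewrite /ori -frelE //.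
by case: ifP => _; apply/asboolP/idP => /tleP.
Qed.

End SpanningTree.

Lemma normal_treeE Tr r : normal_tree K4 Tr r <->
  Tr \subset edges K4 /\
  unique_paths (Defs.frel Tr) (path_table (Defs.frel Tr)) &&
  normal_order (path_table (Defs.frel Tr)) r.
Proof.
rewrite path_tableE; split=> [[st cmp] | [sub /andP[uniq_paths le_total]]].
  have [sub _ _] := st; split=> //; apply/andP; split.
    apply/everyP=> x; apply/everyP=> y; apply/andP.
    split; first exact/(tree_pathP st).
    by apply/allP=> p _; apply/implyP=> /(tree_pathP st) ->.
  apply/everyP=> x; apply/everyP=> y; apply/implyP=> xy.
  by case: (cmp x y xy) => /(tleP st) ->; rewrite ?orbT.
have st : spanning_tree K4 Tr.
  split=> // [x y | x y p q]; move/everyP/(_ x)/everyP/(_ y): uniq_paths.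
    by case/andP=> path_xy _; exists (tree_path (Defs.frel Tr) x y).
  case/andP=> _ /allP unique p_path q_path.
  by rewrite (eqP (implyP (unique p (is_path_words p_path)) p_path))
             (eqP (implyP (unique q (is_path_words q_path)) q_path)).
split=> // x y xy; move/everyP/(_ x)/everyP/(_ y)/implyP/(_ xy): le_total.
by case/orP=> /(tleP st); [left | right].
Qed.

Fixpoint bitseqs n : seq bitseq :=
  if n is n'.+1 then [seq b :: bs | b <- [:: true; false], bs <- bitseqs n']
  else [:: [::]].

Lemma mem_bitseqs bs : bs \in bitseqs (size bs).
Proof.
elim: bs => [|b bs IHbs]; first by rewrite inE.
by apply/allpairsP; exists (b, bs); case: b; rewrite !inE.
Qed.

(* The symmetric table of edge indices; the diagonal index 6 is out of range
   of the six bits, so [rel_of_bits] is irreflexive. *)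
Definition K4_edge_index : seq (seq nat) :=
  [:: [:: 6; 0; 1; 2]; [:: 0; 6; 3; 4]; [:: 1; 3; 6; 5]; [:: 2; 4; 5; 6]]%N.

Definition rel_of_bits (bs : bitseq) : rel 'I_4 :=
  fun x y => nth false bs (nth 6 (nth [::] K4_edge_index x) y).

Definition bits_of t : bitseq :=
  let v := nth ord0 K4_vertices in
  [:: t (v 0) (v 1); t (v 0) (v 2); t (v 0) (v 3); t (v 1) (v 2); t (v 1) (v 3);
      t (v 2) (v 3)]%N.

Lemma bits_ofK t : irreflexive t -> symmetric t -> rel_of_bits (bits_of t) = t.
Proof.
move=> irr sym; apply/funext=> x; apply/funext=> y.
rewrite -(nth_K4_vertices x) -(nth_K4_vertices y).
by case: x y => [[|[|[|[|?]]]] ?] [[|[|[|[|?]]]] ?] //=; rewrite ?irr // sym.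
Qed.

End K4Reflection.

(** * Normal spanning trees of K4 *)

(* The VM evaluates both arguments of [&&] and [==>]; the [if]s below keep the
   expensive checks from being evaluated where they are not needed. *)
Lemma normal_trees_are_paths :
  all (fun bs => let t := rel_of_bits bs in let pt := path_table t in
    if unique_paths t pt then
      [every r, if normal_order pt r then
         [some v0 v1 v2 v3, [&& uniq [:: v0; v1; v2; v3], r == v0 &
                                [every x y, t x y == path4 v0 v1 v2 v3 x y]]]
       else true]
    else true)
  (bitseqs 6).
Proof. by vm_compute. Qed.

Lemma K4_normal_tree_path Tr r : normal_tree K4 Tr r ->
  exists v0 v1 v2 v3,
    [/\ uniq [:: v0; v1; v2; v3], r = v0 & Defs.frel Tr = path4 v0 v1 v2 v3].
Proof.
case/normal_treeE=> _ /andP[uniq_paths le_total].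
have := allP normal_trees_are_paths _ (mem_bitseqs (bits_of (Defs.frel Tr))).
cbv beta zeta.
rewrite (bits_ofK (@frel_irreflexive _ Tr) (@frel_symmetric _ Tr)) uniq_paths.
move/everyP/(_ r); rewrite le_total.
case/someP=> v0 /someP[v1 /someP[v2 /someP[v3 /and3P[v_uniq /eqP-> /everyP Tr_path]]]].
exists v0, v1, v2, v3; split=> //; apply/funext=> x; apply/funext=> y.
by apply/eqP; move/everyP: (Tr_path x).
Qed.

Definition oriented_fcycle_is t pt r u w (l : seq ('I_4 * 'I_4)) :=
  uniq l && [every x y, on_oriented_fcycle t pt r u w x y == ((x, y) \in l)].

Definition path_tree_checks t pt v0 v1 v2 v3 :=
  [&& unique_paths t pt && normal_order pt v0,
      [every x y, (x != y) && ~~ t x y ==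
         [|| pair_eq x y v0 v2, pair_eq x y v1 v3 | pair_eq x y v0 v3]],
      [&& oriented_fcycle_is t pt v0 v0 v2 [:: (v0, v1); (v1, v2); (v2, v0)],
          oriented_fcycle_is t pt v0 v1 v3 [:: (v1, v2); (v2, v3); (v3, v1)] &
          oriented_fcycle_is t pt v0 v0 v3
            [:: (v0, v1); (v1, v2); (v2, v3); (v3, v0)]] &
      [every x y, t x y ==>
         [|| on_fcycle pt v0 v2 x y && on_fcycle pt v1 v3 x y,
             on_fcycle pt v0 v2 x y && on_fcycle pt v0 v3 x y |
             on_fcycle pt v1 v3 x y && on_fcycle pt v0 v3 x y]]].

Lemma all_path_tree_checks : [every v0 v1 v2 v3,
  if uniq [:: v0; v1; v2; v3] then
    let t := path4 v0 v1 v2 v3 in path_tree_checks t (path_table t) v0 v1 v2 v3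
  else true].
Proof. by vm_compute. Qed.

(* The angles of the oriented edges v0v1, v1v2, v2v3, v2v0, v3v1 and v3v0,
   with vertices indexed by their position on the path. *)
Definition path_angle (R : numDomainType) (a1 a2 a3 b1 b2 b3 : R) (i j : nat) : R :=
  match i, j with
  | 0, 1 => a1 | 1, 2 => a2 | 2, 3 => a3 | 2, 0 => b1 | 3, 1 => b2 | 3, 0 => b3
  | _, _ => 0
  end.

Lemma path_angle_bound (R : realDomainType) (p a1 a2 a3 b1 b2 b3 : R) i j :
  all (fun a => `|a| <= p) [:: a1; a2; a3; b1; b2; b3] ->
  `|path_angle a1 a2 a3 b1 b2 b3 i j - path_angle a1 a2 a3 b1 b2 b3 j i| <= p.
Proof.
case/and5P=> a1p a2p a3p b1p /and3P[b2p b3p _].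
have p_ge0 : 0 <= p := le_trans (normr_ge0 a1) a1p.
by case: i => [|[|[|[|i]]]]; case: j => [|[|[|[|j]]]];
  rewrite /= ?subr0 ?sub0r ?normrN ?subrr ?normr0.
Qed.

Section PathTree.
Variables (Tr : {set {set 'I_4}}) (v0 v1 v2 v3 : 'I_4).
Hypotheses (Tr_sub : Tr \subset edges K4) (v_uniq : uniq [:: v0; v1; v2; v3]).
Hypothesis Tr_path : Defs.frel Tr = path4 v0 v1 v2 v3.

Lemma path_vertices_neq :
  [/\ v0 != v1, v0 != v2, v0 != v3 & [/\ v1 != v2, v1 != v3 & v2 != v3]].
Proof.
by move: v_uniq; rewrite /= !inE !negb_or => /and4P[/and3P[-> -> ->] /andP[-> ->] -> _].
Qed.

Lemma path_tree_checksP :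
  path_tree_checks (Defs.frel Tr) (tree_path (Defs.frel Tr)) v0 v1 v2 v3.
Proof.
rewrite Tr_path -path_tableE.
move: all_path_tree_checks => /everyP/(_ v0)/everyP/(_ v1)/everyP/(_ v2)/everyP/(_ v3).
by rewrite v_uniq.
Qed.

Lemma path_tree_normal : normal_tree K4 Tr v0.
Proof.
apply/normal_treeE; split=> //; rewrite path_tableE.
by case/and4P: path_tree_checksP.
Qed.

Let Tr_spanning : spanning_tree K4 Tr := path_tree_normal.1.

Lemma path_tree_nontree E :
  E \in nontree K4 Tr <-> [\/ E = [set v0; v2], E = [set v1; v3] | E = [set v0; v3]].
Proof.
have /and4P[_ /everyP chords _ _] := path_tree_checksP.
have chordE x y : (x != y) && ~~ Defs.frel Tr x y =
    [|| pair_eq x y v0 v2, pair_eq x y v1 v3 | pair_eq x y v0 v3].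
  by apply/eqP; move/everyP: (chords x).
rewrite inE; split=> [/andP[E_Tr /edgesP[x [y [xy E_xy]]]] | E_chord].
  have {}xy : x != y := xy.
  move: (chordE x y); rewrite xy frelE // -!eq_set2 -E_xy E_Tr => /esym.
  by case/or3P=> /eqP->; [apply: Or31 | apply: Or32 | apply: Or33].
have [x [y [-> chord]]] : exists x y, E = [set x; y] /\
    [|| pair_eq x y v0 v2, pair_eq x y v1 v3 | pair_eq x y v0 v3].
  by case: E_chord => ->; eexists; eexists; split; rewrite // /pair_eq !eqxx ?orbT.
move: chord; rewrite -chordE => /andP[xy]; rewrite frelE // => -> /=.
by apply/edgesP; exists x, y.
Qed.

Lemma path_tree_cycle_gains (R : realType) (phi : 'I_4 -> 'I_4 -> R[i]) :
  [/\ cycle_gain Tr v0 phi [set v0; v2] = phi v0 v1 * phi v1 v2 * phi v2 v0,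
      cycle_gain Tr v0 phi [set v1; v3] = phi v1 v2 * phi v2 v3 * phi v3 v1 &
      cycle_gain Tr v0 phi [set v0; v3] =
        phi v0 v1 * phi v1 v2 * phi v2 v3 * phi v3 v0].
Proof.
have /and4P[_ _ /and3P[cycle02 cycle13 cycle03] _] := path_tree_checksP.
have [_ n02 n03 [_ n13 _]] := path_vertices_neq.
have gainE u w l : u != w ->
    oriented_fcycle_is (Defs.frel Tr) (tree_path (Defs.frel Tr)) v0 u w l ->
    cycle_gain Tr v0 phi [set u; w] = \prod_(xy <- l) phi xy.1 xy.2.
  move=> uw /andP[l_uniq /everyP l_cycle]; apply: cycle_gainE => // x y.
  by rewrite oriented_fcycleE //; apply/eqP; move/everyP: (l_cycle x).
rewrite (gainE _ _ _ n02 cycle02) (gainE _ _ _ n13 cycle13) (gainE _ _ _ n03 cycle03).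
by rewrite !big_cons big_nil !mulr1 !mulrA.
Qed.

Lemma path_tree_covered_twice F : F \in Tr -> exists E1 E2,
  [/\ E1 \in nontree K4 Tr, E2 \in nontree K4 Tr, E1 != E2,
      F \in Defs.fcycle Tr E1 & F \in Defs.fcycle Tr E2].
Proof.
move=> F_Tr; have /edgesP[x [y [xy F_xy]]] := subsetP Tr_sub F F_Tr.
have /and4P[_ _ _ /everyP covered] := path_tree_checksP.
have [n01 n02 n03 [n12 n13 n23]] := path_vertices_neq.
have E02 : [set v0; v2] \in nontree K4 Tr by apply/path_tree_nontree; apply: Or31.
have E13 : [set v1; v3] \in nontree K4 Tr by apply/path_tree_nontree; apply: Or32.
have E03 : [set v0; v3] \in nontree K4 Tr by apply/path_tree_nontree; apply: Or33.
have n02_13 : [set v0; v2] != [set v1; v3].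
  by rewrite eq_set2 /pair_eq (negbTE n01) (negbTE n03).
have n02_03 : [set v0; v2] != [set v0; v3].
  by rewrite eq_set2 /pair_eq (negbTE n23) (negbTE n03) andbF.
have n13_03 : [set v1; v3] != [set v0; v3].
  by rewrite eq_set2 /pair_eq eq_sym (negbTE n01) (negbTE n13).
move: (covered x) => /everyP/(_ y)/implyP; rewrite frelE // -F_xy => /(_ F_Tr).
rewrite -!fcycleE // F_xy.
by case/or3P=> /andP[F1 F2]; [exists [set v0; v2], [set v1; v3] |
  exists [set v0; v2], [set v0; v3] | exists [set v1; v3], [set v0; v3]].
Qed.

Lemma path_tree_not_DEP : ~ DEP_wrt K4 Tr.
Proof.
apply: not_DEP_wrt Tr_spanning _ path_tree_covered_twice.
have [n01 _ _ _] := path_vertices_neq.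
apply/set0Pn; exists [set v0; v1]; rewrite -frelE // Tr_path.
by rewrite /path4 /pair_eq !eqxx.
Qed.

Lemma path_tree_GNRP (R : realType) : GNRP_wrt K4 R Tr v0.
Proof.
move=> c _.
have pihalf_gt0 : 0 < pi / 2 :> R by rewrite divr_gt0 ?pi_gt0.
have [a1 [a2 [a3 [b1 [b2 [b3 [small e02 e13 e03]]]]]]] :=
  K4_cycle_angles pihalf_gt0 (c [set v0; v2]) (c [set v1; v3]) (c [set v0; v3]).
have period : 4 * (pi / 2) = pi *+ 2 :> R by rewrite mulr2n; field.
rewrite period in e02 e13 e03.
pose theta i j := path_angle a1 a2 a3 b1 b2 b3 i j - path_angle a1 a2 a3 b1 b2 b3 j i.
pose label x := index x [:: v0; v1; v2; v3].
have label0 : label v0 = 0%N := @index_uniq _ v0 0 [:: v0; v1; v2; v3] isT v_uniq.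
have label1 : label v1 = 1%N := @index_uniq _ v0 1 [:: v0; v1; v2; v3] isT v_uniq.
have label2 : label v2 = 2%N := @index_uniq _ v0 2 [:: v0; v1; v2; v3] isT v_uniq.
have label3 : label v3 = 3%N := @index_uniq _ v0 3 [:: v0; v1; v2; v3] isT v_uniq.
exists (fun x y => expi (theta (label x) (label y))); split.
- by move=> x y _; rewrite norm_expi -expiN opprB.
- have [gain02 gain13 gain03] := path_tree_cycle_gains
    (fun x y => expi (theta (label x) (label y))).
  move=> E /path_tree_nontree[]->; rewrite ?gain02 ?gain13 ?gain03;
    rewrite ?label0 ?label1 ?label2 ?label3 -!expiD /theta /= !subr0; exact: expi_eqmod.
- move=> x y; rewrite /gain_adj; case: ifP => _; last by rewrite -complexRe ler0c.
  exact/Re_expi_ge0/path_angle_bound.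
Qed.

End PathTree.

Theorem theorem4p3 (R : realType) :
  simple_graph K4 /\
  (exists (Tr : {set {set 'I_4}}) (r : 'I_4), normal_tree K4 Tr r) /\
  (forall (Tr : {set {set 'I_4}}) (r : 'I_4), normal_tree K4 Tr r ->
     ~ DEP_wrt K4 Tr /\ GNRP_wrt K4 R Tr r).
Proof.
split; [|split].
- by split=> [x | x y]; rewrite /K4 ?eqxx // eq_sym.
- pose v i := nth ord0 K4_vertices i.
  exists [set [set v 0%N; v 1%N]; [set v 1%N; v 2%N]; [set v 2%N; v 3%N]], (v 0%N).
  apply: path_tree_normal; last by rewrite frel_path4 //; exact: isT.
    have K4_edge a b : a != b -> [set a; b] \in edges K4.
      by move=> ab; apply/edgesP; exists a, b.
    apply/subsetP=> F; rewrite !inE -orbA.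
    by case/or3P=> /eqP->; apply: K4_edge; exact: isT.
  exact: isT.
- move=> Tr r normal_Tr; have [[Tr_sub _ _] _] := normal_Tr.
  have [v0 [v1 [v2 [v3 [v_uniq -> Tr_path]]]]] := K4_normal_tree_path normal_Tr.
  split; [exact: path_tree_not_DEP Tr_sub v_uniq Tr_path |].
  exact: path_tree_GNRP Tr_sub v_uniq Tr_path R.
Qed.
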